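(* Let $\mathcal{D}$ be a clocked basic action theory, $K\in\mathbb{N}$, and $\sigma_1,\sigma_2$ situations with $\sigma_1 \approx_{\mathcal{D}K} \sigma_2$. Let $\phi$ be a clocked formula uniform in $s$ whose maximal natural-number constant is $\leq K$. Then $\mathcal{D}\models\phi[\sigma_1]$ if and only if $\mathcal{D}\models\phi[\sigma_2]$.
   Context: Situation calculus setting: sorts action, situation, object and time (the real numbers); $S_0$ initial situation; $\mathit{do}(a,s)$ the successor situation; $\phi[\sigma]$ is $\phi$ with $s$ replaced by $\sigma$. Fluents are relation or function symbols with last argument a situation and other arguments objects; there are finitely many fluents, finitely many action types and a finite set $\mathcal{O}$ of object constants (with unique names and domain closure). A formula is uniform in $s$ if it mentions no situation term other than $s$ and does not mention $\mathit{Poss}$. A basic action theory (BAT) is $\mathcal{D} = \mathcal{D}_0 \cup \mathcal{D}_{poss} \cup \mathcal{D}_{ssa} \cup \mathcal{D}_{ca} \cup \mathcal{D}_{co} \cup \Sigma$: initial description (uniform in $S_0$, complete information), precondition axioms, successor state axioms, domain closure and unique name axioms for actions and objects, and foundational axioms. A clock comparison is a formula $f(\vec x,s)\bowtie v$ or $v\bowtie v'$ with $f$ a functional fluent, $v,v'\in\mathbb{N}$, $\bowtie\in\{<,\leq,=,\geq,>\}$. A formula is clocked if every atomic subformula mentioning a term of sort time is a clock comparison; time-independent if it mentions no term of sort time. A BAT is clocked if there is a distinguished action type $\mathit{wait}(t)$ (other action types have no time argument) and: every functional fluent takes values of sort time; $\mathcal{D}_0$ sets every functional fluent to $0$ at $S_0$;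 every functional fluent $f$ has successor state axiom $f(\vec o,\mathit{do}(a,s))=y \equiv \exists t\,(a=\mathit{wait}(t)\wedge y=f(\vec o,s)+t) \vee (\neg\exists t\, a=\mathit{wait}(t)) \wedge (\phi_f(\vec o,a,s)\wedge y=0 \vee \neg\phi_f(\vec o,a,s)\wedge y=f(\vec o,s))$ with $\phi_f$ time-independent and uniform in $s$; relational fluents have successor state axioms $R(\vec o,\mathit{do}(a,s))\equiv\phi_R(\vec o,a,s)$ with $\phi_R$ clocked and uniform in $s$; precondition axioms have clocked right-hand sides uniform in $s$; $\mathit{Poss}(\mathit{wait}(t),s)\equiv\top$. Functional fluents are called clocks; $\mathcal{C}$ is the set of ground situation-suppressed clock terms; the clock valuation $\nu_\sigma:\mathcal{C}\to\mathbb{R}_{\geq0}$ is given by $\nu_\sigma(\omega)=\tau$ iff $\mathcal{D}\models\omega[\sigma]=\tau$. Regions: for $u,v\in\mathbb{R}_{\geq0}$, $u\sim_K v$ iff either $u>K$ and $v>K$, or $u,v\leq K$ with $\lfloor u\rfloor=\lfloor v\rfloor$ and $\lceil u\rceil=\lceil v\rceil$. The fractional part is $\mathrm{fract}(v)=v-\lfloor v\rfloor$ if $v\leq K$ and $0$ if $v>K$. Situations satisfy $\sigma_1\approx_{\mathcal{D}K}\sigma_2$ iff (1) for every relational fluent $R$ and ground object tuple $\vec\rho$, $\mathcal{D}\models R(\vec\rho,\sigma_1)$ iff $\mathcal{D}\models R(\vec\rho,\sigma_2)$; and (2) for every $\omega\in\mathcal{C}$, $\nu_{\sigma_1}(\omega)\sim_K\nu_{\sigma_2}(\omega)$,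 and for all $\omega,\omega'\in\mathcal{C}$, $\mathrm{fract}(\nu_{\sigma_1}(\omega))\leq\mathrm{fract}(\nu_{\sigma_1}(\omega'))$ iff $\mathrm{fract}(\nu_{\sigma_2}(\omega))\leq\mathrm{fract}(\nu_{\sigma_2}(\omega'))$. *)

From mathcomp Require Import all_boot.
From Stdlib Require Import Reals.

Set Implicit Arguments.
Unset Strict Implicit.
Unset Printing Implicit Defensive.

(* Signature: finitely many object constants (UNA + domain closure,   *)
(* so the object sort IS this finite type), relational fluents,        *)
(* clocks (= functional fluents, valued in time), and non-wait action  *)
(* types, each with an arity (number of object arguments).            *)
Record signature := Signature {
  Obj : finType;
  RF : finType;  r_ar : RF -> nat;
  CF : finType;  c_ar : CF -> nat;
  AT : finType;  a_ar : AT -> nat }.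

Section SitCalc.
Variable S : signature.

(* Actions (UNA + domain closure for actions): A(o1..on) or wait(t). *)
Inductive action :=
| Act (A : AT S) (args : (a_ar A).-tuple (Obj S))
| Wait (t : R).

(* Situations (foundational axioms): finite action histories,
   most recent action first. *)
Definition sit := seq action.
Definition S0 : sit := [::].
Definition do_ (a : action) (s : sit) : sit := a :: s.

(* Syntax of situation-suppressed clocked formulas, uniform in s.     *)
(* The only atoms mentioning time terms are clock comparisons.        *)
Inductive oterm := OVar (x : nat) | OConst (o : Obj S).
Inductive aterm :=
| AVar (a : nat)
| AApp (A : AT S) (args : (a_ar A).-tuple oterm).
Inductive cmp := CLt | CLe | CEq | CGe | CGt.

Inductive formula :=
| FTrue | FFalse
| FRel (r : RF S) (args : (r_ar r).-tuple oterm)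
| FClock (f : CF S) (args : (c_ar f).-tuple oterm) (c : cmp) (v : nat)
| FNat (v : nat) (c : cmp) (w : nat)
| FEqO (t1 t2 : oterm)
| FEqA (t1 t2 : aterm)
| FNot (p : formula)
| FAnd (p q : formula) | FOr (p q : formula)
| FImp (p q : formula) | FIff (p q : formula)
| FExO (x : nat) (p : formula) | FAllO (x : nat) (p : formula)
| FExA (a : nat) (p : formula) | FAllA (a : nat) (p : formula).

Fixpoint time_indep (p : formula) : bool :=
  match p with
  | FClock _ _ _ _ | FNat _ _ _ => false
  | FNot q | FExO _ q | FAllO _ q | FExA _ q | FAllA _ q => time_indep q
  | FAnd q1 q2 | FOr q1 q2 | FImp q1 q2 | FIff q1 q2 =>
      time_indep q1 && time_indep q2
  | _ => true
  end.

Fixpoint maxconst (p : formula) : nat :=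
  match p with
  | FClock _ _ _ v => v
  | FNat v _ w => maxn v w
  | FNot q | FExO _ q | FAllO _ q | FExA _ q | FAllA _ q => maxconst q
  | FAnd q1 q2 | FOr q1 q2 | FImp q1 q2 | FIff q1 q2 =>
      maxn (maxconst q1) (maxconst q2)
  | _ => 0
  end.

Definition ot_closed (xo : seq nat) (t : oterm) : bool :=
  if t is OVar x then x \in xo else true.
Definition at_closed (xo xa : seq nat) (t : aterm) : bool :=
  match t with
  | AVar a => a \in xa
  | AApp _ args => all (ot_closed xo) args
  end.
Fixpoint closed_in (xo xa : seq nat) (p : formula) : bool :=
  match p with
  | FTrue | FFalse | FNat _ _ _ => true
  | FRel _ args => all (ot_closed xo) args
  | FClock _ args _ _ => all (ot_closed xo) args
  | FEqO t1 t2 => ot_closed xo t1 && ot_closed xo t2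
  | FEqA t1 t2 => at_closed xo xa t1 && at_closed xo xa t2
  | FNot q => closed_in xo xa q
  | FAnd q1 q2 | FOr q1 q2 | FImp q1 q2 | FIff q1 q2 =>
      closed_in xo xa q1 && closed_in xo xa q2
  | FExO x q | FAllO x q => closed_in (x :: xo) xa q
  | FExA a q | FAllA a q => closed_in xo (a :: xa) q
  end.
Definition closed (p : formula) : bool := closed_in [::] [::] p.

(* Semantics.  Domains are fixed (objects = Obj S, actions = action,  *)
(* situations = sit, time = R); a structure interprets the fluents    *)
(* and Poss.                                                          *)
Record interp := Interp {
  Rint : forall r : RF S, (r_ar r).-tuple (Obj S) -> sit -> Prop;
  Fint : forall f : CF S, (c_ar f).-tuple (Obj S) -> sit -> R;
  PossI : action -> sit -> Prop }.

Definition upd (T : Type) (e : nat -> T) (x : nat) (v : T) : nat -> T :=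
  fun y => if y == x then v else e y.

Definition oeval (ov : nat -> Obj S) (t : oterm) : Obj S :=
  match t with OVar x => ov x | OConst o => o end.
Definition aeval (ov : nat -> Obj S) (av : nat -> action) (t : aterm) : action :=
  match t with
  | AVar a => av a
  | AApp A args => @Act A (map_tuple (oeval ov) args)
  end.

Definition cmpR (c : cmp) (x y : R) : Prop :=
  match c with
  | CLt => (x < y)%R | CLe => (x <= y)%R | CEq => x = y
  | CGe => (x >= y)%R | CGt => (x > y)%R
  end.

Fixpoint eval (M : interp) (ov : nat -> Obj S) (av : nat -> action) (s : sit)
  (p : formula) : Prop :=
  match p with
  | FTrue => True
  | FFalse => False
  | FRel r args => Rint M (map_tuple (oeval ov) args) s
  | FClock f args c v => cmpR c (Fint M (map_tuple (oeval ov) args) s) (INR v)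
  | FNat v c w => cmpR c (INR v) (INR w)
  | FEqO t1 t2 => oeval ov t1 = oeval ov t2
  | FEqA t1 t2 => aeval ov av t1 = aeval ov av t2
  | FNot q => ~ eval M ov av s q
  | FAnd q1 q2 => eval M ov av s q1 /\ eval M ov av s q2
  | FOr q1 q2 => eval M ov av s q1 \/ eval M ov av s q2
  | FImp q1 q2 => eval M ov av s q1 -> eval M ov av s q2
  | FIff q1 q2 => eval M ov av s q1 <-> eval M ov av s q2
  | FExO x q => exists o, eval M (upd ov x o) av s q
  | FAllO x q => forall o, eval M (upd ov x o) av s q
  | FExA a q => exists b, eval M ov (upd av a b) s q
  | FAllA a q => forall b, eval M ov (upd av a b) s q
  end.

(* Basic action theories with the clocked shape built in:             *)
(*  - D0 : set of sentences uniform in S0 (plus: clocks are 0 at S0),  *)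
(*  - ssaR r = phi_R, with object vars 0..n-1 for o and action var 0  *)
(*    for a:   R(o, do(a,s)) <-> phi_R(o,a,s),                        *)
(*  - ssaF f = phi_f (clock SSA with wait / reset / unchanged),        *)
(*  - precA A = pi_A with object vars 0..n-1: Poss(A(x),s) <-> pi_A,   *)
(*    and Poss(wait(t), s) <-> True.                                   *)
(* Axioms hold under universal closure of all variables.              *)
Record BAT := MkBAT {
  D0 : formula -> Prop;
  ssaR : RF S -> formula;
  ssaF : CF S -> formula;
  precA : AT S -> formula }.

Definition vtuple (n : nat) (ov : nat -> Obj S) : n.-tuple (Obj S) :=
  [tuple ov i | i < n].

Definition is_model (D : BAT) (M : interp) : Prop :=
  (forall p, D0 D p -> forall ov av, eval M ov av S0 p) /\
  (forall f (rho : (c_ar f).-tuple (Obj S)), Fint M rho S0 = 0%R) /\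
  (forall r ov av s,
      Rint M (vtuple (r_ar r) ov) (do_ (av 0) s) <-> eval M ov av s (ssaR D r)) /\
  (forall f ov av s,
      match av 0 with
      | Wait t =>
          Fint M (vtuple (c_ar f) ov) (do_ (av 0) s)
          = (Fint M (vtuple (c_ar f) ov) s + t)%R
      | Act _ _ =>
          (eval M ov av s (ssaF D f) ->
             Fint M (vtuple (c_ar f) ov) (do_ (av 0) s) = 0%R) /\
          (~ eval M ov av s (ssaF D f) ->
             Fint M (vtuple (c_ar f) ov) (do_ (av 0) s)
             = Fint M (vtuple (c_ar f) ov) s)
      end) /\
  (forall A ov av s,
      PossI M (@Act A (vtuple (a_ar A) ov)) s <-> eval M ov av s (precA D A)) /\
  (forall t s, PossI M (Wait t) s).

Definition entails (D : BAT) (s : sit) (p : formula) : Prop :=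
  forall M, is_model D M -> forall ov av, eval M ov av s p.

Definition complete_info (D : BAT) : Prop :=
  forall p, closed p -> entails D S0 p \/ entails D S0 (FNot p).

(* clocked BAT: (shape built in above) + phi_f time-independent;
   a BAT's D0 has complete information. *)
Definition clocked_BAT (D : BAT) : Prop :=
  complete_info D /\ (forall f, time_indep (ssaF D f)).

Definition clock_val (D : BAT) (s : sit) (f : CF S)
  (rho : (c_ar f).-tuple (Obj S)) (tau : R) : Prop :=
  forall M, is_model D M -> Fint M rho s = tau.

End SitCalc.

Arguments Act {S} A args.
Arguments Wait {S} t.
Arguments FRel {S} r args.
Arguments FClock {S} f args c v.
Arguments AApp {S} A args.

Definition rfloor (u : R) : R := IZR (Int_part u).
Definition rceil (u : R) : R := (- IZR (Int_part (- u)))%R.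

Definition reg_sim (K : nat) (u v : R) : Prop :=
  ((INR K < u)%R /\ (INR K < v)%R) \/
  ((u <= INR K)%R /\ (v <= INR K)%R /\ rfloor u = rfloor v /\ rceil u = rceil v).

Definition fract (K : nat) (v : R) : R :=
  if Rle_dec v (INR K) then (v - rfloor v)%R else 0%R.

Definition region_equiv (S : signature) (D : BAT S) (K : nat) (s1 s2 : sit S) : Prop :=
  (forall (r : RF S) (rho : (r_ar r).-tuple (Obj S)),
      entails D s1 (FRel r (map_tuple (@OConst S) rho)) <->
      entails D s2 (FRel r (map_tuple (@OConst S) rho))) /\
  (forall (f : CF S) (rho : (c_ar f).-tuple (Obj S)) (tau1 tau2 : R),
      clock_val D s1 rho tau1 -> clock_val D s2 rho tau2 -> reg_sim K tau1 tau2) /\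
  (forall (f f' : CF S) (rho : (c_ar f).-tuple (Obj S)) (rho' : (c_ar f').-tuple (Obj S))
          (tau1 tau1' tau2 tau2' : R),
      clock_val D s1 rho tau1 -> clock_val D s1 rho' tau1' ->
      clock_val D s2 rho tau2 -> clock_val D s2 rho' tau2' ->
      ((fract K tau1 <= fract K tau1')%R <-> (fract K tau2 <= fract K tau2')%R)).

From Pilot Require Import Defs.
From mathcomp Require Import all_boot.
From Stdlib Require Import Reals Lra Lia Classical.

Set Implicit Arguments.
Unset Strict Implicit.
Unset Printing Implicit Defensive.

(* A basic action theory with complete initial information determines the
   fluents of all its models at every situation: models agree at S0 by
   completeness, and the successor state axioms propagate the agreement along
   any action history.  So region equivalence of s1 and s2, which is phrased
   through entailment, says that in any single model the relational fluents
   coincide at s1 and s2 and every clock has region-equivalent values there.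
   The region of a clock value decides all its comparisons with naturals up to
   K, so an induction on phi shows that phi holds at s1 iff it holds at s2. *)

Section Formulas.
Variable S : signature.

Lemma vtuple_nth (o0 : Obj S) n (t : n.-tuple (Obj S)) :
  vtuple n (nth o0 t) = t.
Proof. by apply: eq_from_tnth => i; rewrite tnth_mktuple (tnth_nth o0). Qed.

Lemma oeval_map_OConst (ov : nat -> Obj S) n (t : n.-tuple (Obj S)) :
  map_tuple (oeval ov) (map_tuple (@OConst S) t) = t.
Proof. by apply: val_inj; rewrite /= -map_comp map_id_in. Qed.

Lemma closed_FRel_OConst r (rho : (r_ar r).-tuple (Obj S)) :
  Defs.closed (FRel r (map_tuple (@OConst S) rho)).
Proof. by rewrite /Defs.closed /= all_map; apply/allP. Qed.

Lemma eval_transfer K (M M' : interp S) (s s' : sit S) :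
  (forall (r : RF S) (rho : (r_ar r).-tuple (Obj S)), Rint M rho s <-> Rint M' rho s') ->
  (forall (f : CF S) (rho : (c_ar f).-tuple (Obj S)) c v, (v <= K)%N ->
     cmpR c (Fint M rho s) (INR v) <-> cmpR c (Fint M' rho s') (INR v)) ->
  forall p, (maxconst p <= K)%N ->
  forall ov av, eval M ov av s p <-> eval M' ov av s' p.
Proof.
move=> rel clk; elim=> //= [f args c v le_vK|p IHp le_pK
  |p IHp q IHq le_pqK|p IHp q IHq le_pqK|p IHp q IHq le_pqK|p IHp q IHq le_pqK
  |x p IHp le_pK|x p IHp le_pK|a p IHp le_pK|a p IHp le_pK] ov av.
- exact: clk.
- by rewrite IHp.
1-4: by move: le_pqK; rewrite geq_max => /andP[le_pK le_qK]; rewrite IHp // IHq.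
1,3: by split=> -[o h]; exists o; apply/(IHp le_pK).
all: by split=> h o; apply/(IHp le_pK).
Qed.

Definition same_fluents (M M' : interp S) (s : sit S) : Prop :=
  (forall (r : RF S) (rho : (r_ar r).-tuple (Obj S)), Rint M rho s <-> Rint M' rho s) /\
  (forall (f : CF S) (rho : (c_ar f).-tuple (Obj S)), Fint M rho s = Fint M' rho s).

Lemma eval_same_fluents M M' s : same_fluents M M' s ->
  forall p ov av, eval M ov av s p <-> eval M' ov av s p.
Proof.
move=> [rel clk] p; apply: eval_transfer (leqnn (maxconst p)) => // f rho c v _.
by rewrite clk.
Qed.

End Formulas.

Section Models.
Variables (S : signature) (D : BAT S) (o0 : Obj S).
Hypothesis complete : complete_info D.

Lemma same_fluents_S0 M M' : is_model D M -> is_model D M' ->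
  same_fluents M M' (S0 S).
Proof.
move=> HM HM'; split=> [r rho|f rho]; last by rewrite HM.2.1 HM'.2.1.
have [ent|ent] := complete (closed_FRel_OConst rho);
  have := ent M HM (fun=> o0) (fun=> Wait 0%R);
  have := ent M' HM' (fun=> o0) (fun=> Wait 0%R);
  rewrite /= !oeval_map_OConst; tauto.
Qed.

Lemma same_fluents_do M M' a s : is_model D M -> is_model D M' ->
  same_fluents M M' s -> same_fluents M M' (do_ a s).
Proof.
move=> [_ [_ [ssaR_M [ssaF_M _]]]] [_ [_ [ssaR_M' [ssaF_M' _]]]] same.
split=> [r rho|f rho]; rewrite -(vtuple_nth o0 rho).
  have /= -> := ssaR_M r (nth o0 rho) (fun=> a) s.
  have /= -> := ssaR_M' r (nth o0 rho) (fun=> a) s.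
  exact: eval_same_fluents.
have /= := ssaF_M f (nth o0 rho) (fun=> a) s.
have /= := ssaF_M' f (nth o0 rho) (fun=> a) s.
case: a => [A args|t] clock_M' clock_M; last by rewrite clock_M clock_M' same.2.
have [reset|keep] := classic (eval M (nth o0 rho) (fun=> Act A args) s (ssaF D f)).
  have reset' := reset; rewrite (eval_same_fluents same) in reset'.
  by rewrite clock_M.1 ?clock_M'.1.
have keep' := keep; rewrite (eval_same_fluents same) in keep'.
by rewrite clock_M.2 ?clock_M'.2 ?same.2.
Qed.

Lemma models_same_fluents M M' s : is_model D M -> is_model D M' ->
  same_fluents M M' s.
Proof.
move=> HM HM'; elim: s => [|a s]; first exact: same_fluents_S0.
exact: same_fluents_do.
Qed.

Lemma entails_FRel_model M s r (rho : (r_ar r).-tuple (Obj S)) :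
  is_model D M -> entails D s (FRel r (map_tuple (@OConst S) rho)) <-> Rint M rho s.
Proof.
move=> HM; split=> [ent|hold M' HM' ov av].
  by have := ent M HM (fun=> o0) (fun=> Wait 0%R); rewrite /= oeval_map_OConst.
by rewrite /= oeval_map_OConst; apply/((models_same_fluents s HM HM').1).
Qed.

Lemma clock_val_model M s f (rho : (c_ar f).-tuple (Obj S)) :
  is_model D M -> clock_val D s rho (Fint M rho s).
Proof. by move=> HM M' HM'; rewrite (models_same_fluents s HM HM').2. Qed.

End Models.

Lemma lt_IZR_rfloor u z : (u < IZR z <-> rfloor u < IZR z)%R.
Proof.
have [floor_le floor_gt] := base_Int_part u; rewrite /rfloor; split=> lt_uz.
  lra.
have : (Int_part u + 1 <= z)%Z by have := lt_IZR _ _ lt_uz; lia.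
move/IZR_le; rewrite plus_IZR; lra.
Qed.

Lemma le_IZR_rceil u z : (u <= IZR z <-> rceil u <= IZR z)%R.
Proof.
have := lt_IZR_rfloor (- u) (- z); rewrite opp_IZR /rceil /rfloor => floor_opp.
split=> le_uz; apply: Rnot_lt_le => lt_zu.
  have : (- u < - IZR z)%R by apply/floor_opp; lra.
  lra.
have : (IZR (Int_part (- u)) < - IZR z)%R by apply/floor_opp; lra.
lra.
Qed.

Lemma cmpR_congr x y w :
  (x < w <-> y < w)%R -> (x <= w <-> y <= w)%R ->
  forall c, cmpR c x w <-> cmpR c y w.
Proof.
move=> lt_xy le_xy c.
have [lt_xw|le_wx] := Rlt_le_dec x w.
  by have := lt_xy.1 lt_xw; case: c => /=; split; lra.
have le_wy : (w <= y)%R by apply: Rnot_lt_le => /lt_xy.2; lra.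
have [le_xw|lt_wx] := Rle_lt_dec x w.
  by have := le_xy.1 le_xw; case: c => /=; split; lra.
have lt_wy : (w < y)%R by apply: Rnot_le_lt => /le_xy.2; lra.
by case: c => /=; split; lra.
Qed.

Lemma reg_sim_cmpR K x y c v : reg_sim K x y -> (v <= K)%N ->
  cmpR c x (INR v) <-> cmpR c y (INR v).
Proof.
move=> sim /leP/le_INR le_vK.
case: sim => [[lt_Kx lt_Ky]|[_ [_ [floor_xy ceil_xy]]]].
  by case: c => /=; split; lra.
rewrite INR_IZR_INZ; apply: cmpR_congr.
  by rewrite lt_IZR_rfloor floor_xy -lt_IZR_rfloor.
by rewrite le_IZR_rceil ceil_xy -le_IZR_rceil.
Qed.

Theorem lemma2 (S : signature) (D : BAT S) (K : nat) (s1 s2 : sit S)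
  (phi : formula S) :
  clocked_BAT D ->
  region_equiv D K s1 s2 ->
  (maxconst phi <= K)%N ->
  (entails D s1 phi <-> entails D s2 phi).
Proof.
(* The ordering of fractional parts only matters for successor situations. *)
move=> [complete _] [rel_equiv [clock_sim _]] le_phiK.
have [[o0]|no_obj] := classic (inhabited (Obj S)); last first.
  by split=> _ M _ ov; case: no_obj; exists; exact: ov 0.
suff eval_iff M : is_model D M ->
    forall ov av, eval M ov av s1 phi <-> eval M ov av s2 phi.
  by split=> ent M HM ov av; apply/(eval_iff M HM); apply: ent.
move=> HM; apply: (eval_transfer _ _ le_phiK) => [r rho|f rho c v le_vK].
  by rewrite -!(entails_FRel_model o0 complete _ _ HM); apply: rel_equiv.
apply: reg_sim_cmpR le_vK; apply: clock_sim; exact: clock_val_model.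
Qed.
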